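(* Fix an integer $d\geq 2$, let $f_n$ be a sequence with $f_n\to\infty$, and set $r_n=f_n\left(\frac{\log n}{n}\right)^{1/d}$. Let $\mathcal{G}_n=\mathcal{G}(\mathcal{X}_n;r_n)$. Let $q,q'\in[0,1]^d$ satisfy $q\preceq_\delta q'$ for some $\delta>0$ independent of $n$. Then almost surely there exist $X,X'\in\mathcal{X}_n$ such that (i) $\|X-q\|_2\leq r_n/2$ and $\|X'-q'\|_2\leq r_n/2$; (ii) $q\preceq X$ and $X'\preceq q'$; (iii) $X$ and $X'$ are connected in $\mathcal{G}_n$ by a monotone path.
   Context: Logarithms are natural. For $p=(p_1,\dots,p_d),p'=(p'_1,\dots,p'_d)\in\mathbb{R}^d$, $p\preceq p'$ means $p_i\leq p'_i$ for all $i$; for $\delta>0$, $p\preceq_\delta p'$ means $p\preceq p'$ and $\min_i(p'_i-p_i)=\delta$. $\mathcal{X}_n$ consists of $n$ points drawn independently and uniformly at random from $[0,1]^d$. $\mathcal{G}(V;r)$ is the directed graph with vertex set $V$ and edges $(x,y)$ for all $x\neq y\in V$ with $\|x-y\|_2\leq r$. A path in this graph is monotone if every traversed edge $(x,y)$ satisfies $x\preceq y$. An event holds almost surely (a.s.) if its probability tends to $1$ as $n\to\infty$. *)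

From HB Require Import structures.
From mathcomp Require Import all_boot all_order all_algebra.
From mathcomp Require Import all_classical all_reals all_analysis.
Set Implicit Arguments. Unset Strict Implicit. Unset Printing Implicit Defensive.
Import Order.TTheory GRing.Theory Num.Theory.
Local Open Scope classical_set_scope.
Local Open Scope ring_scope.

Definition pt (R : realType) (d : nat) := 'I_d -> R.

Definition ple (R : realType) (d : nat) (p p' : 'I_d -> R) : Prop :=
  forall i, p i <= p' i.

Definition ple_delta (R : realType) (d : nat) (delta : R) (p p' : 'I_d -> R) : Prop :=
  ple p p' /\ (forall i, delta <= p' i - p i) /\ (exists i, p' i - p i = delta).

Definition dist2 (R : realType) (d : nat) (x y : 'I_d -> R) : R :=
  Num.sqrt (\sum_(i < d) (x i - y i) ^+ 2).

Definition mono_edge (R : realType) (d : nat) (r : R) (x y : 'I_d -> R) : Prop :=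
  x <> y /\ dist2 x y <= r /\ ple x y.

Definition mono_path (R : realType) (d : nat) (V : set ('I_d -> R)) (r : R)
    (x y : 'I_d -> R) : Prop :=
  exists s : seq ('I_d -> R),
    V x /\ (forall z, z \in s -> V z) /\
    (forall k, (k < size s)%N ->
       mono_edge r (nth x (x :: s) k) (nth x s k)) /\
    last x s = y.

Definition inbox (R : realType) (d : nat) (a b x : 'I_d -> R) : Prop :=
  forall j, a j <= x j <= b j.

Definition boxvol (R : realType) (d : nat) (a b : 'I_d -> R) : R :=
  \prod_(j < d) Num.max 0 (Num.min (b j) 1 - Num.max (a j) 0).

(* X : nat -> T -> R^d is an i.i.d. sequence of uniform points in [0,1]^d:
   measurable coordinates, and for every finite family of distinct indices and
   closed boxes, P(all X_i in B_i) = prod_i Leb(B_i ∩ [0,1]^d).  (Closed boxes form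
   a pi-system generating the Borel sets, so this pins down the joint law.) *)
Definition iid_uniform (R : realType) (dd : measure_display) (T : measurableType dd)
    (P : probability T R) (d : nat) (X : nat -> T -> 'I_d -> R) : Prop :=
  (forall i j, measurable_fun setT (fun w => X i w j)) /\
  (forall (S : seq nat) (a b : nat -> 'I_d -> R), uniq S ->
     P (\bigcap_(i in [set` S]) [set w | inbox (a i) (b i) (X i w)]) =
     ((\prod_(i <- S) boxvol (a i) (b i))%R)%:E).

Definition sample (R : realType) (T : Type) (d : nat) (X : nat -> T -> 'I_d -> R)
    (n : nat) (w : T) : set ('I_d -> R) :=
  [set x | exists i, (i < n)%N /\ X i w = x].

Definition radius (R : realType) (d : nat) (f : nat -> R) (n : nat) : R :=
  f n * powR (ln (n%:R) / n%:R) (d%:R)^-1.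

Definition good_event (R : realType) (T : Type) (d : nat) (X : nat -> T -> 'I_d -> R)
    (f : nat -> R) (q q' : 'I_d -> R) (n : nat) : set T :=
  [set w | exists x x',
     sample X n w x /\ sample X n w x' /\
     dist2 x q <= radius d f n / 2 /\ dist2 x' q' <= radius d f n / 2 /\
     ple q x /\ ple x' q' /\
     mono_path (sample X n w) (radius d f n) x x'].

From Pilot Require Import Defs.
From HB Require Import structures.
From mathcomp Require Import all_boot all_order all_algebra.
From mathcomp Require Import all_classical all_reals all_analysis.
From mathcomp Require Import ring lra.
Import Order.TTheory GRing.Theory Num.Theory.
Local Open Scope classical_set_scope.
Local Open Scope ring_scope.
Set Implicit Arguments. Unset Strict Implicit. Unset Printing Implicit Defensive.

(* Cut the way from q to q' into a chain of about delta / (2 s) boxes of side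
   s, with s = 2 (log n / n)^(1/d): the lower corners of the boxes move from q
   to q' - s in equal steps exceeding s, so points taken in consecutive boxes are
   distinct, comparable and at distance at most d (2 s / delta + s) <= r_n as
   soon as f_n >= 8 d / delta.  A box of volume s^d >= 2 log n / n is missed by
   all n sample points with probability (1 - s^d)^n <= n^-2, hence by the union
   bound every box of the chain is hit with probability at least 1 - 3 / n, and
   one sample point per box is a monotone path whose ends lie within
   d s <= r_n / 2 of q and q'. *)

Lemma set_cons (T : eqType) (x : T) (s : seq T) : [set` x :: s] = x |` [set` s].
Proof.
apply/seteqP; split => y /=; rewrite inE; first by case/orP => [/eqP|]; [left|right].
by case=> [->|->]; rewrite ?eqxx ?orbT.
Qed.

Section independent_complements.
Context (R : realType) (dd : measure_display) (T : measurableType dd).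
Context (P : probability T R) (E : nat -> set T) (p : nat -> R).
Hypothesis E_measurable : forall i, measurable (E i).
Hypothesis E_independent : forall S : seq nat, uniq S ->
  P (\bigcap_(i in [set` S]) E i) = (\prod_(i <- S) p i)%:E.

Let bigcap_measurable (S : seq nat) (F : nat -> set T) :
  (forall i, measurable (F i)) -> measurable (\bigcap_(i in [set` S]) F i).
Proof. by move=> mF; apply: fin_bigcap_measurable => [|i _]; [exact: finite_seq|exact: mF]. Qed.

Lemma prob_bigcapI_setC (S U : seq nat) : uniq (S ++ U) ->
  P (\bigcap_(i in [set` S]) E i `&` \bigcap_(j in [set` U]) ~` E j) =
  (\prod_(i <- S) p i * \prod_(j <- U) (1 - p j))%:E.
Proof.
elim: U S => [|j U IH] S uSU.
  by rewrite set_nil bigcap_set0 setIT big_nil mulr1 E_independent // -(cats0 S).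
have uSjU : uniq ((j :: S) ++ U).
  by rewrite -(perm_uniq (_ : perm_eq (S ++ [:: j] ++ U) _)) // perm_catCA.
have uSU' : uniq (S ++ U) by apply: subseq_uniq uSU; rewrite cat_subseq ?subseq_cons.
set A := \bigcap_(i in [set` S]) E i; set C := \bigcap_(i in [set` U]) ~` E i.
have mAC : measurable (A `&` C).
  by apply: measurableI; apply: bigcap_measurable => // i; apply: measurableC.
have -> : \bigcap_(i in [set` j :: U]) ~` E i = ~` E j `&` C.
  by rewrite set_cons bigcap_setU1.
rewrite setICA setIC -setDE measureD //; last first.
  by rewrite (le_lt_trans (probability_le1 _ _)) ?ltry.
have -> : A `&` C `&` E j = \bigcap_(i in [set` j :: S]) E i `&` C.
  by rewrite set_cons bigcap_setU1 setIAC (setIC (E j)).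
apply: eq_trans (f_equal2 (fun a b => a - b)%E (IH S uSU') (IH _ uSjU)) _.
by rewrite -EFinB !big_cons; congr (_%:E); ring.
Qed.

Lemma prob_bigcap_setC (U : seq nat) : uniq U ->
  P (\bigcap_(j in [set` U]) ~` E j) = (\prod_(j <- U) (1 - p j))%:E.
Proof.
move=> uU; have := prob_bigcapI_setC (S := [::]) uU.
by rewrite set_nil bigcap_set0 setTI big_nil mul1r.
Qed.

End independent_complements.

Section sample_in_boxes.
Context (R : realType) (dd : measure_display) (T : measurableType dd).
Context (P : probability T R) (d : nat) (X : nat -> T -> 'I_d -> R).
Hypothesis X_iid : iid_uniform P X.

Definition box_event (i : nat) (a b : 'I_d -> R) : set T := [set w | inbox a b (X i w)].

Definition boxes_hit (n m : nat) (a b : nat -> 'I_d -> R) : set T :=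
  [set w | forall k, (k < m)%N -> exists x, sample X n w x /\ inbox (a k) (b k) x].

Lemma box_event_measurable i a b : measurable (box_event i a b).
Proof.
have -> : box_event i a b = \bigcap_(j in [set: 'I_d]) ((fun w => X i w j) @^-1` `[a j, b j]).
  apply/seteqP; split => w /= h j; first by move=> _ /=; rewrite in_itv; exact: h.
  by have := h j I; rewrite /= in_itv.
apply: fin_bigcap_measurable => [|j _]; first exact: finite_finset.
by rewrite -(setTI (_ @^-1` _)); exact: X_iid.1.
Qed.

Lemma prob_box_missed n a b :
  P (\bigcap_(i in [set` iota 0 n]) ~` box_event i a b) = ((1 - boxvol a b) ^+ n)%:E.
Proof.
rewrite (prob_bigcap_setC (p := fun=> boxvol a b)) ?iota_uniq //.
- by rewrite -(subn0 n) -/(index_iota 0 n) prodr_const_nat.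
- by move=> i; exact: box_event_measurable.
- by move=> S uS; rewrite X_iid.2.
Qed.

Lemma boxes_hitC n m a b : ~` boxes_hit n m a b =
  \big[setU/set0]_(k < m) \bigcap_(i in [set` iota 0 n]) ~` box_event i (a k) (b k).
Proof.
rewrite -(bigcup_mkord m (fun k => \bigcap_(i in [set` iota 0 n]) ~` box_event i (a k) (b k))).
apply/seteqP; split => w /=.
  move=> /existsNP[k /not_implyP[km nohit]]; exists k => // i /=.
  rewrite mem_iota add0n => /andP[_ hi] hin.
  by apply: nohit; exists (X i w); split => //; exists i.
move=> [k km nohit] hit; have [_ [[i [hi <-]] hin]] := hit k km.
by apply: (nohit i) => //=; rewrite mem_iota.
Qed.

Lemma prob_boxes_hit n m a b :
  measurable (boxes_hit n m a b) /\
  ((1 - \sum_(k < m) (1 - boxvol (a k) (b k)) ^+ n)%:E <= P (boxes_hit n m a b))%E.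
Proof.
set F := fun k => \bigcap_(i in [set` iota 0 n]) ~` box_event i (a k) (b k).
have mF k : measurable (F k).
  apply: fin_bigcap_measurable => [|i _]; first exact: finite_seq.
  exact/measurableC/box_event_measurable.
have mU : measurable (\big[setU/set0]_(k < m) F k) by exact: bigsetU_measurable.
have -> : boxes_hit n m a b = ~` \big[setU/set0]_(k < m) F k by rewrite -boxes_hitC setCK.
split; first exact: measurableC.
rewrite probability_setC // -(fineK (fin_num_measure P _ mU)) -EFinB lee_fin lerD2l lerN2.
rewrite -lee_fin fineK ?fin_num_measure // -sumEFin.
apply: le_trans (Boole_inequality P (fun k (_ : (k < m)%N) => mF k)) _.
by rewrite le_eqVlt (eq_bigr _ (fun k _ => prob_box_missed _ _ _)) eqxx.
Qed.

End sample_in_boxes.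

Section monotone_paths.
Context (R : realType) (d : nat).
Implicit Types (x y : 'I_d -> R) (V : set ('I_d -> R)).

Lemma dist2_le_mul x y (t : R) :
  0 <= t -> (forall j, `|x j - y j| <= t) -> dist2 x y <= d%:R * t.
Proof.
move=> t0 xy_t; rewrite /dist2 -(ger0_norm (mulr_ge0 (ler0n _ d) t0)) -sqrtr_sqr.
apply: ler_wsqrtr; apply: (@le_trans _ _ (\sum_(i < d) t ^+ 2)).
  by apply: ler_sum => i _; rewrite -real_normK ?num_real // lerXn2r ?nnegrE.
rewrite sumr_const card_ord exprMn -mulr_natl -[t ^+ 2 *+ d]mulr_natl.
rewrite ler_wpM2r ?sqr_ge0 // mulr1 -natrX ler_nat.
by case: (posnP d) => [->//|d_gt0]; rewrite expnS expn1 leq_pmulr.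
Qed.

Lemma mono_edge_of_boxes (r t : R) (a a' b b' x y : 'I_d -> R) : (0 < d)%N ->
  inbox a a' x -> inbox b b' y ->
  (forall j, a' j < b j) -> (forall j, b' j - a j <= t) -> d%:R * t <= r ->
  mono_edge r x y.
Proof.
move=> d_gt0 x_in y_in sep close tr.
have xy j : x j < y j /\ y j - x j <= t.
  by move: (x_in j) (y_in j) (sep j) (close j) => /andP[? ?] /andP[? ?] ? ?; split; lra.
split; first by move=> exy; have [] := xy (Ordinal d_gt0); rewrite exy ltxx.
split; last by move=> j; have [/ltW] := xy j.
apply: le_trans (dist2_le_mul _ _) tr.
  by have [lt_xy le_t] := xy (Ordinal d_gt0); lra.
by move=> j; have [lt_xy le_t] := xy j; rewrite distrC ger0_norm // subr_ge0 ltW.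
Qed.

Lemma mono_path_of_chain V (r : R) (x : nat -> 'I_d -> R) (K : nat) :
  (forall k, (k <= K)%N -> V (x k)) ->
  (forall k, (k < K)%N -> mono_edge r (x k) (x k.+1)) ->
  Defs.mono_path V r (x 0%N) (x K).
Proof.
move=> xV edge; exists (map x (iota 1 K)); split; first exact: xV.
split.
  by move=> z /mapP[k]; rewrite mem_iota add1n => /andP[_ /xV] ? ->.
split; last first.
  rewrite (last_nth (x 0%N)) size_map size_iota -[_ :: _]/(map x (iota 0 K.+1)).
  by rewrite (nth_map 0%N) ?size_iota // nth_iota.
move=> k; rewrite size_map size_iota => kK; have kK1 : (k < K.+1)%N by rewrite ltnW.
rewrite -[_ :: _]/(map x (iota 0 K.+1)) !(nth_map 0%N) ?size_iota //.
by rewrite !nth_iota // add0n add1n; exact: edge.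
Qed.

Lemma mono_path_through_boxes V (r t : R) (a b : nat -> 'I_d -> R) (K : nat) :
  (0 < d)%N ->
  (forall k, (k <= K)%N -> exists x, V x /\ inbox (a k) (b k) x) ->
  (forall k j, (k < K)%N -> b k j < a k.+1 j /\ b k.+1 j - a k j <= t) ->
  d%:R * t <= r ->
  exists x0 xK, [/\ V x0, inbox (a 0%N) (b 0%N) x0, V xK, inbox (a K) (b K) xK &
                    Defs.mono_path V r x0 xK].
Proof.
move=> d_gt0 hit step tr.
have /choice[x hx] k : exists x, (k <= K)%N -> V x /\ inbox (a k) (b k) x.
  by case: (leqP k K) => [/hit[x ?]|_]; [exists x|exists (fun=> 0)].
have [V0 in0] := hx 0%N (leq0n K); have [VK inK] := hx K (leqnn K).
exists (x 0%N), (x K); split => //; apply: mono_path_of_chain => [k /hx[]//|k kK].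
have [_ xk_in] := hx k (ltnW kK); have [_ xk1_in] := hx k.+1 kK.
by apply: mono_edge_of_boxes xk_in xk1_in _ _ tr => // j; have [] := step k j kK.
Qed.

End monotone_paths.

Section box_chain.
Context (R : realType) (d : nat) (q q' : 'I_d -> R) (delta s : R).
Hypotheses (q_cube : forall j, 0 <= q j <= 1) (q'_cube : forall j, 0 <= q' j <= 1).
Hypotheses (q_delta_q' : forall j, delta <= q' j - q j) (s_gt0 : 0 < s) (s_small : 4 * s < delta).

(* Chosen so that the step (q' j - q j - s) / chain_len of the corners lies in
   (s, 2 s / delta]. *)
Definition chain_len : nat := (Num.truncn (delta / (2 * s))).+1.

Definition chain_lo (k : nat) (j : 'I_d) : R :=
  q j + k%:R / chain_len%:R * (q' j - q j - s).

Definition chain_hi (k : nat) (j : 'I_d) : R := chain_lo k j + s.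

Local Notation K := chain_len.

Let K_gt0 : 0 < K%:R :> R. Proof. by rewrite ltr0n. Qed.

Let delta_gt0 : 0 < delta. Proof. by move: s_gt0 s_small; lra. Qed.

Lemma chain_len_gt : delta < 2 * s * K%:R.
Proof. by have := truncnS_gt (delta / (2 * s)); rewrite ltr_pdivrMr ?mulr_gt0 // mulrC. Qed.

Lemma chain_len_le : K%:R <= delta / (2 * s) + 1.
Proof. by rewrite /chain_len -natr1 lerD2r truncn_le // divr_ge0 // ltW // mulr_gt0. Qed.

Lemma chain_len_mul_le : 2 * s * K%:R <= delta + 2 * s.
Proof.
have -> : delta + 2 * s = 2 * s * (delta / (2 * s) + 1) by field; rewrite gt_eqF.
by rewrite ler_pM2l ?mulr_gt0 // chain_len_le.
Qed.

Lemma chain_lo0 : chain_lo 0 =1 q.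
Proof. by move=> j; rewrite /chain_lo !mul0r addr0. Qed.

Lemma chain_hi_len : chain_hi K =1 q'.
Proof. by move=> j; rewrite /chain_hi /chain_lo divff ?gt_eqF // mul1r; ring. Qed.

Lemma boxvol_chain k : (k <= K)%N -> boxvol (chain_lo k) (chain_hi k) = s ^+ d.
Proof.
move=> kK; rewrite /boxvol (eq_bigr (fun=> s)) ?prodr_const ?card_ord // => j _.
have c01 : 0 <= (k%:R / K%:R : R) <= 1.
  by rewrite divr_ge0 ?ler0n ?(ltW K_gt0) //= ler_pdivrMr // mul1r ler_nat.
move: (s_gt0) (s_small) (q_cube j) (q'_cube j) (q_delta_q' j) c01.
move=> ? ? /andP[? ?] /andP[? ?] ? /andP[? ?].
have lo_ge0 : 0 <= chain_lo k j by rewrite /chain_lo; nra.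
have hi_le1 : chain_hi k j <= 1 by rewrite /chain_hi /chain_lo; nra.
by rewrite min_l // (@max_l _ _ (chain_lo k j)) // /chain_hi addrAC subrr add0r max_r // ltW.
Qed.

Lemma chain_step k j : (k < K)%N ->
  chain_hi k j < chain_lo k.+1 j /\ chain_hi k.+1 j - chain_lo k j <= 2 * s / delta + s.
Proof.
move=> _; rewrite /chain_hi.
have -> : chain_lo k.+1 j = chain_lo k j + (q' j - q j - s) / K%:R.
  by rewrite /chain_lo -natr1; field; rewrite gt_eqF.
set c := (q' j - q j - s) / K%:R.
move: (s_gt0) (s_small) (q_cube j) (q'_cube j) (q_delta_q' j) chain_len_mul_le chain_len_gt.
move=> ? ? /andP[? ?] /andP[? ?] ? ? ?.
have s_lt_c : s < c by rewrite /c ltr_pdivlMr //; nra.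
have c_le : c <= 2 * s / delta.
  have : 1 < 2 * s * K%:R / delta by rewrite ltr_pdivlMr // mul1r.
  by rewrite /c ler_pdivrMr // mulrAC => ?; lra.
by split; lra.
Qed.

End box_chain.

Lemma ple_delta_le1 (R : realType) (d : nat) (delta : R) (q q' : 'I_d -> R) :
  (forall j, 0 <= q j <= 1) -> (forall j, 0 <= q' j <= 1) ->
  ple_delta delta q q' -> delta <= 1.
Proof.
move=> q_cube q'_cube [_ [_ [j <-]]].
by move: (q_cube j) (q'_cube j) => /andP[? ?] /andP[? ?]; lra.
Qed.

Lemma good_event_prob_ge (R : realType) (dd : measure_display) (T : measurableType dd)
    (P : probability T R) (d : nat) (X : nat -> T -> 'I_d -> R)
    (f : nat -> R) (q q' : 'I_d -> R) (delta s : R) (n : nat) :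
  (0 < d)%N -> iid_uniform P X ->
  (forall j, 0 <= q j <= 1) -> (forall j, 0 <= q' j <= 1) ->
  (forall j, delta <= q' j - q j) -> delta <= 1 ->
  0 < s -> 4 * s < delta -> 4 * d%:R * s <= Defs.radius d f n * delta ->
  exists G : set T, [/\ measurable G, G `<=` good_event X f q q' n &
    ((1 - (delta / (2 * s) + 2) * (1 - s ^+ d) ^+ n)%:E <= P G)%E].
Proof.
move=> d_gt0 X_iid q_cube q'_cube q_delta_q' delta_le1 s_gt0 s_small r_large.
set r := Defs.radius d f n in r_large *; set K := chain_len delta s.
set lo := chain_lo q q' delta s; set hi := chain_hi q q' delta s.
have [hit_meas hit_prob] := prob_boxes_hit X_iid n K.+1 lo hi.
have dR_gt0 : 0 < d%:R :> R by rewrite ltr0n.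
have delta_gt0 : 0 < delta by lra.
have r_gt0 : 0 < r.
  by rewrite -(pmulr_lgt0 _ delta_gt0) (lt_le_trans _ r_large) // !mulr_gt0.
have ds_le : d%:R * s <= r / 4 by nra.
have step_le : d%:R * (2 * s / delta + s) <= r.
  have : d%:R * (2 * s) / delta <= r / 2 by rewrite ler_pdivrMr; nra.
  by rewrite mulrA; lra.
exists (boxes_hit X n K.+1 lo hi); split => //.
  move=> w hit.
  have [x0 [xK [sx0 x0_in sxK xK_in path]]] := mono_path_through_boxes d_gt0 hit
    (fun k j => chain_step q_cube q'_cube q_delta_q' s_gt0 s_small j) step_le.
  have near_corner (x c : 'I_d -> R) : (forall j, `|x j - c j| <= s) -> dist2 x c <= r / 2.
    by move=> xc; apply: le_trans (dist2_le_mul (ltW s_gt0) xc) _; lra.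
  have x0_near j : q j <= x0 j <= q j + s.
    by move: (x0_in j); rewrite /lo /hi /chain_hi !chain_lo0.
  have xK_near j : q' j - s <= xK j <= q' j.
    move: (xK_in j) (chain_hi_len q q' delta s j).
    by rewrite /lo /hi /chain_hi => + <-; rewrite addrK.
  exists x0, xK; do 2!split => //; split; last split.
  - apply: near_corner => j; move: (x0_near j) => /andP[? ?].
    by rewrite ler_norml; apply/andP; split; lra.
  - apply: near_corner => j; move: (xK_near j) => /andP[? ?].
    by rewrite ler_norml; apply/andP; split; lra.
  - by split=> [j|]; [case/andP: (x0_near j)|split=> // j; case/andP: (xK_near j)].
apply: le_trans hit_prob; rewrite lee_fin lerD2l lerN2.
rewrite (eq_bigr (fun=> (1 - s ^+ d) ^+ n)) => [|k _]; last first.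
  by rewrite (boxvol_chain q_cube q'_cube q_delta_q' s_gt0 s_small (ltn_ord k)).
rewrite sumr_const card_ord -[X in X <= _]mulr_natl ler_wpM2r //.
  by rewrite exprn_ge0 // subr_ge0 exprn_ile1 //; lra.
by have := chain_len_le s_gt0 s_small; rewrite -natr1; lra.
Qed.

Lemma ln_le_mul_near (R : realType) (eps : R) :
  0 < eps -> \forall n \near \oo, ln (n%:R : R) <= eps * n%:R.
Proof.
move=> eps_gt0; near=> n.
have n_large : (2 / eps) ^+ 2 < n%:R by near: n; exact: nbhs_infty_gtr.
have n_gt0 : 0 < n%:R :> R := le_lt_trans (sqr_ge0 _) n_large.
set t := Num.sqrt (n%:R : R).
have t_gt0 : 0 < t by rewrite sqrtr_gt0.
have t2 : t ^+ 2 = n%:R by rewrite sqr_sqrtr // ltW.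
have t_ge : 2 <= eps * t.
  rewrite -ler_pdivrMl // -(ler_pXn2r (isT : (0 < 2)%N)) ?nnegrE ?(ltW t_gt0) //.
    by rewrite t2 mulrC (ltW n_large).
  by rewrite mulr_ge0 // invr_ge0 ltW.
have := ln_sublinear t_gt0; rewrite -t2 lnXn // mulr2n; nra.
Unshelve. all: by end_near.
Qed.

Lemma chain_failure_le (R : realType) (d n : nat) (delta s : R) :
  (0 < d)%N -> expR 1 <= n%:R :> R -> 0 <= delta <= 1 -> 0 < s <= 1 ->
  2 * (ln (n%:R : R) / n%:R) <= s ^+ d ->
  (delta / (2 * s) + 2) * (1 - s ^+ d) ^+ n <= 3 / n%:R.
Proof.
move=> d_gt0 n_ge_e /andP[delta_ge0 delta_le1] /andP[s_gt0 s_le1] sd_ge.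
set m : R := n%:R in n_ge_e sd_ge *.
have m_ge2 : 2 <= m by apply: le_trans n_ge_e; have := expR_ge1Dx (1 : R); lra.
have m_gt0 : 0 < m by lra.
have ln_ge1 : 1 <= ln m by rewrite -[leLHS](expRK 1) ler_ln ?posrE ?expR_gt0.
have sd_le1 : s ^+ d <= 1 by rewrite exprn_ile1 // ltW.
have ms_ge2 : 2 <= m * s.
  rewrite -ler_pdivrMl //; apply: le_trans (_ : s ^+ d <= s).
    apply: le_trans sd_ge; rewrite mulrC ler_wpM2l // -[X in X <= _]mul1r.
    by rewrite ler_wpM2r // invr_ge0 ltW.
  by rewrite -[leRHS]expr1 ler_wiXn2l // ltW.
have decay : (1 - s ^+ d) ^+ n <= m ^- 2.
  apply: (@le_trans _ _ (expR (- s ^+ d) ^+ n)).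
    by rewrite lerXn2r ?nnegrE ?expR_ge0 ?subr_ge0 // expR_ge1Dx.
  rewrite -expRM_natr -/m -[m in leRHS]lnK ?posrE // -expRM_natl -expRN ler_expR.
  by move: sd_ge; rewrite mulrA ler_pdivrMr // => ?; nra.
have front : delta / (2 * s) <= m / 4.
  by rewrite ler_pdivrMr ?mulr_gt0 //; nra.
apply: le_trans (_ : (m / 4 + 2) * m ^- 2 <= _).
  apply: ler_pM decay; [|by rewrite exprn_ge0 // subr_ge0|by rewrite lerD2r].
  by rewrite addr_ge0 // divr_ge0 // mulr_ge0 // ltW.
by rewrite ler_pdivlMr // expr2 invfM mulrA mulfVK ?gt_eqF // ler_pdivrMr //; lra.
Qed.

Lemma good_event_prob_ge_large (R : realType) (dd : measure_display) (T : measurableType dd)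
    (P : probability T R) (d : nat) (X : nat -> T -> 'I_d -> R)
    (f : nat -> R) (q q' : 'I_d -> R) (delta : R) (n : nat) :
  (0 < d)%N -> iid_uniform P X ->
  (forall j, 0 <= q j <= 1) -> (forall j, 0 <= q' j <= 1) ->
  0 < delta -> ple_delta delta q q' ->
  expR 1 <= n%:R :> R -> 8 * d%:R / delta <= f n -> ln (n%:R : R) <= (delta / 16) ^+ d * n%:R ->
  exists G : set T, [/\ measurable G, G `<=` good_event X f q q' n &
    ((1 - 3 / n%:R)%:E <= P G)%E].
Proof.
move=> d_gt0 X_iid q_cube q'_cube delta_gt0 qq' n_ge_e f_large ln_small.
have delta_le1 := ple_delta_le1 q_cube q'_cube qq'.
have n_gt1 : 1 < n%:R :> R by apply: lt_le_trans n_ge_e; rewrite expR_gt1.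
have n_gt0 : 0 < n%:R :> R by lra.
set x := ln (n%:R : R) / n%:R in ln_small *.
have x_gt0 : 0 < x by rewrite divr_gt0 // ln_gt0.
set tau := powR x d%:R^-1.
have tau_gt0 : 0 < tau by rewrite powR_gt0.
have tau_d : tau ^+ d = x.
  by rewrite -powR_mulrn ?powR_ge0 // -powRrM mulVf ?powRr1 ?ltW // pnatr_eq0 -lt0n.
have tau_le : tau <= delta / 16.
  rewrite -(ler_pXn2r d_gt0) ?nnegrE ?(ltW tau_gt0) ?divr_ge0 ?(ltW delta_gt0) //.
  by rewrite tau_d ler_pdivrMr.
have r_large : 4 * d%:R * (2 * tau) <= Defs.radius d f n * delta.
  move: f_large; rewrite ler_pdivrMr // => f_large.
  by rewrite /Defs.radius -/x -/tau; nra.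
have s_gt0 : 0 < 2 * tau by rewrite mulr_gt0.
have s_small : 4 * (2 * tau) < delta by lra.
have [G [mG sG PG]] :=
  good_event_prob_ge d_gt0 X_iid q_cube q'_cube qq'.2.1 delta_le1 s_gt0 s_small r_large.
exists G; split => //; apply: le_trans PG; rewrite lee_fin lerD2l lerN2.
apply: chain_failure_le => //; first by rewrite ltW.
  by rewrite s_gt0; lra.
rewrite exprMn tau_d -/x ler_wpM2r ?(ltW x_gt0) // -[X in X <= _]expr1.
by rewrite ler_eXn2l // ltr1n.
Qed.

Lemma prob_cvg1 (R : realType) (dd : measure_display) (T : measurableType dd)
    (P : probability T R) (A : nat -> set T) (c : R) :
  (forall n, measurable (A n)) ->
  (\forall n \near \oo, ((1 - c / n%:R)%:E <= P (A n))%E) ->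
  P (A n) @[n --> \oo] --> 1%E.
Proof.
move=> mA PA; apply: cvg_EFin; first by near=> n; rewrite fin_num_measure.
apply/cvgrPdist_le => e e_gt0; near=> n.
have n_large : c / e < n%:R by near: n; exact: nbhs_infty_gtr.
have n_gt0 : 0 < n%:R :> R by near: n; exact: nbhs_infty_gtr.
have : ((1 - c / n%:R)%:E <= P (A n))%E by near: n.
have := probability_le1 P (mA n).
rewrite -(fineK (fin_num_measure P _ (mA n))) !lee_fin => P_le1 P_ge.
have : c / n%:R <= e by rewrite ler_pdivrMr // mulrC -ler_pdivrMr // ltW.
by rewrite /= ger0_norm ?subr_ge0 //; lra.
Unshelve. all: by end_near.
Qed.

Theorem lemma7 (R : realType) (dd : measure_display) (T : measurableType dd)
    (P : probability T R) (d : nat) (X : nat -> T -> 'I_d -> R)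
    (f : nat -> R) (q q' : 'I_d -> R) (delta : R) :
  (2 <= d)%N ->
  iid_uniform P X ->
  f @ \oo --> +oo ->
  (forall i, 0 <= q i <= 1) -> (forall i, 0 <= q' i <= 1) ->
  0 < delta -> ple_delta delta q q' ->
  exists A : nat -> set T,
    (forall n, measurable (A n) /\ A n `<=` good_event X f q q' n) /\
    (P (A n) @[n --> \oo] --> 1%E).
Proof.
move=> d_ge2 X_iid f_oo q_cube q'_cube delta_gt0 qq'.
have d_gt0 : (0 < d)%N by apply: leq_trans d_ge2.
pose large n := [/\ expR 1 <= n%:R :> R, 8 * d%:R / delta <= f n &
                   ln (n%:R : R) <= (delta / 16) ^+ d * n%:R].
have /choice[A hA] n : exists G : set T, [/\ measurable G, G `<=` good_event X f q q' n &
    (large n -> ((1 - 3 / n%:R)%:E <= P G)%E)].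
  have [[n_ge_e f_large ln_small]|not_large] := pselect (large n); last first.
    by exists set0; split => // /not_large.
  have [G [mG sG PG]] := good_event_prob_ge_large d_gt0 X_iid q_cube q'_cube delta_gt0 qq'
    n_ge_e f_large ln_small.
  by exists G.
exists A; split=> [n|]; first by case: (hA n).
apply: (prob_cvg1 (c := 3)) => [n|]; first by case: (hA n).
near=> n; have [_ _ PA] := hA n; apply: PA; split.
- by near: n; exact: nbhs_infty_ger.
- by near: n; exact: (proj1 (cvgryPge _) f_oo).
- by near: n; apply: ln_le_mul_near; rewrite exprn_gt0 // divr_gt0.
Unshelve. all: by end_near.
Qed.
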